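(* Let $(\lambda_k),(x_k),(y_k)$ be generated by the acceleration framework (context) for a convex differentiable $g$ with minimizer $x^*$, $g^*=g(x^* )$, parameters $\sigma\in(0,1)$, $\delta\ge0$. Then for all $k\ge1$, \[ A_k[g(y_k)-g^*]+\frac12\|x_k-x^*\|^2+\sum_{i\in[k]}\frac{(1-\sigma)A_i}{2\lambda_i}\|y_i-\tilde x_{i-1}\|^2\le\frac12\|x^*\|^2+\delta_k, \] where $\delta_k=\delta\sum_{i\in[k]}a_i\|x_i-x^*\|+\frac{\delta^2}{2(1-\sigma)}\sum_{i\in[k]}a_i^2$.
   Context: Acceleration framework: let $g:\mathbb{R}^d\to\mathbb{R}$ be convex and differentiable, $\sigma\in(0,1)$, $\delta\ge0$, $K\ge1$. Sequences $(\lambda_k)_{k=1}^K\subset(0,\infty)$ and $(x_k)_{k=0}^K,(y_k)_{k=0}^K\subset\mathbb{R}^d$ are generated by the framework if $x_0=y_0=0$, $A_0=0$, and for each $k=0,\dots,K-1$, with $a_{k+1}=\frac12\big[\lambda_{k+1}+\sqrt{\lambda_{k+1}^2+4\lambda_{k+1}A_k}\big]$, $A_{k+1}=A_k+a_{k+1}$, $\tilde x_k=\frac{A_k}{A_{k+1}}y_k+\frac{a_{k+1}}{A_{k+1}}x_k$, one has $\|\lambda_{k+1}\nabla g(y_{k+1})+y_{k+1}-\tilde x_k\|\le\sigma\|y_{k+1}-\tilde x_k\|+\lambda_{k+1}\delta$ and $\|x_{k+1}-(x_k-a_{k+1}\nabla g(y_{k+1}))\|\le a_{k+1}\delta$. (Note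 $\lambda_{k+1}A_{k+1}=a_{k+1}^2$.) *)

From mathcomp Require Import ssreflect ssrfun ssrbool eqtype ssrnat seq fintype bigop.
From Stdlib Require Import Reals.
Open Scope R_scope.

Definition vec (d : nat) := 'I_d -> R.

Definition vadd {d} (u v : vec d) : vec d := fun i => u i + v i.
Definition vsub {d} (u v : vec d) : vec d := fun i => u i - v i.
Definition vscale {d} (c : R) (u : vec d) : vec d := fun i => c * u i.
Definition vzero {d} : vec d := fun _ => 0.

Definition dot {d} (u v : vec d) : R := \big[Rplus/0]_(i < d) (u i * v i).
Definition vnorm {d} (u : vec d) : R := sqrt (dot u u).

Definition convex_fun {d} (g : vec d -> R) : Prop :=
  forall (x y : vec d) (t : R), 0 <= t <= 1 ->
    g (vadd (vscale t x) (vscale (1 - t) y)) <= t * g x + (1 - t) * g y.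

Definition has_gradient {d} (g : vec d -> R) (grad : vec d -> vec d) : Prop :=
  forall (x : vec d) (eps : R), 0 < eps -> exists del : R, 0 < del /\
    forall h : vec d, vnorm h < del ->
      Rabs (g (vadd x h) - g x - dot (grad x) h) <= eps * vnorm h.

Definition next_a (lam Ak : R) : R := (lam + sqrt (lam ^ 2 + 4 * lam * Ak)) / 2.

Fixpoint Aseq (lam : nat -> R) (k : nat) : R :=
  match k with
  | O => 0
  | S k' => Aseq lam k' + next_a (lam (S k')) (Aseq lam k')
  end.

(* a_k for k >= 1 *)
Definition aseq (lam : nat -> R) (k : nat) : R := next_a (lam k) (Aseq lam k.-1).

Definition xtilde {d} (lam : nat -> R) (x y : nat -> vec d) (k : nat) : vec d :=
  vadd (vscale (Aseq lam k / Aseq lam (S k)) (y k))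
       (vscale (aseq lam (S k) / Aseq lam (S k)) (x k)).

Definition generated_by_framework {d} (grad : vec d -> vec d)
  (sigma delta : R) (K : nat) (lam : nat -> R) (x y : nat -> vec d) : Prop :=
  (forall k, (1 <= k <= K)%nat -> 0 < lam k) /\
  x O = vzero /\ y O = vzero /\
  forall k, (k < K)%nat ->
    vnorm (vsub (vadd (vscale (lam (S k)) (grad (y (S k)))) (y (S k)))
                (xtilde lam x y k))
      <= sigma * vnorm (vsub (y (S k)) (xtilde lam x y k)) + lam (S k) * delta /\
    vnorm (vsub (x (S k)) (vsub (x k) (vscale (aseq lam (S k)) (grad (y (S k))))))
      <= aseq lam (S k) * delta.

(* sum_{i in [k]} f i = f 1 + ... + f k *)
Definition sum1 (f : nat -> R) (k : nat) : R := \big[Rplus/0]_(1 <= i < k.+1) f i.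

(* Write A_k, a_k for the coefficients of the framework, v = grad g (y_{k+1}),
   s_k = y_{k+1} - tilde x_k, and
       E_k = A_k (g(y_k) - g(xs)) + 1/2 |x_k - xs|^2,
   where xs is the comparison point of the theorem.
   The proof shows the one-step decrease
       E_{k+1} + (1-sigma) A_{k+1}/(2 lam_{k+1}) |s_k|^2
         <= E_k + delta a_{k+1} |x_{k+1} - xs| + delta^2/(2(1-sigma)) a_{k+1}^2
   and sums it from E_0 = 1/2 |xs|^2.  The decrease combines three estimates:
   - a value estimate, from the gradient inequality of the convex function g
     at y_{k+1} tested against y_k and xs;
   - a distance estimate for the inexact gradient step x_{k+1} ~ x_k - a v,
     which is an exact expansion of squares plus Cauchy-Schwarz;
   - a relative-error estimate for the inexact proximal step y_{k+1}, which
     together with the identity a_{k+1}^2 = lam_{k+1} A_{k+1} absorbs the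
     remaining gradient terms. *)

From HB Require Import structures.
From mathcomp Require Import ssreflect ssrfun ssrbool eqtype ssrnat seq fintype bigop.
From Stdlib Require Import Reals Lra Psatz FunctionalExtensionality.
Open Scope R_scope.

(* (R, +, 0) as a commutative monoid, so that the generic bigop lemmas
   apply to the sums defining dot and sum1. *)
HB.instance Definition _ :=
  Monoid.isComLaw.Build R 0 Rplus
    (fun a b c => esym (Rplus_assoc a b c)) Rplus_comm Rplus_0_l.

Section EuclideanAlgebra.
Context {d : nat}.
Implicit Types u v w : vec d.

Lemma dot_addl u v w : dot (vadd u v) w = dot u w + dot v w.
Proof. by rewrite /dot -big_split /=; apply: eq_bigr => i _; rewrite /vadd; ring. Qed.

Lemma dot_subl u v w : dot (vsub u v) w = dot u w - dot v w.
Proof.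
rewrite /dot; apply: (big_rec3 (fun a b c => a = b - c)); first ring.
by move=> i a b c _ ->; rewrite /vsub; ring.
Qed.

Lemma dot_scalel c u w : dot (vscale c u) w = c * dot u w.
Proof.
rewrite /dot; apply: (big_rec2 (fun a b => a = c * b)); first ring.
by move=> i a b _ ->; rewrite /vscale; ring.
Qed.

Lemma dot_comm u w : dot u w = dot w u.
Proof. by rewrite /dot; apply: eq_bigr => i _; ring. Qed.

Lemma dot_addr u v w : dot w (vadd u v) = dot w u + dot w v.
Proof. by rewrite !(dot_comm w) dot_addl. Qed.

Lemma dot_subr u v w : dot w (vsub u v) = dot w u - dot w v.
Proof. by rewrite !(dot_comm w) dot_subl. Qed.

Lemma dot_scaler c u w : dot w (vscale c u) = c * dot w u.
Proof. by rewrite !(dot_comm w) dot_scalel. Qed.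

Definition dotE :=
  (dot_addl, dot_subl, dot_scalel, dot_addr, dot_subr, dot_scaler).

Lemma dot_ge0 u : 0 <= dot u u.
Proof.
rewrite /dot; apply: big_ind => //; [lra | move=> a b; lra | move=> i _; nra].
Qed.

Lemma vnorm_ge0 u : 0 <= vnorm u.
Proof. exact: sqrt_pos. Qed.

Lemma vnorm_sq u : vnorm u ^ 2 = dot u u.
Proof. by rewrite /vnorm /= Rmult_1_r sqrt_sqrt //; apply: dot_ge0. Qed.

Lemma vnorm_scale c u : 0 <= c -> vnorm (vscale c u) = c * vnorm u.
Proof.
move=> hc; rewrite /vnorm dot_scalel dot_scaler -Rmult_assoc sqrt_mult.
- by rewrite sqrt_square.
- nra.
- exact: dot_ge0.
Qed.

Lemma vnorm_vzero_sub u : vnorm (vsub vzero u) = vnorm u.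
Proof.
by rewrite /vnorm /dot; f_equal; apply: eq_bigr => i _; rewrite /vsub /vzero; ring.
Qed.

(* Weighted AM-GM form of Cauchy-Schwarz, from |c u - w|^2 >= 0. *)
Lemma dot_le_weighted u w c : 0 < c -> 2 * c * dot u w <= c ^ 2 * dot u u + dot w w.
Proof.
move=> hc; have := dot_ge0 (vsub (vscale c u) w).
by rewrite !dotE (dot_comm w u); nra.
Qed.

(* Cauchy-Schwarz: choosing c = (|w| + e)/(|u| + e) in the weighted form
   gives <u,w> <= |u||w| + e(|u| + |w|)/2 for every e > 0. *)
Lemma cauchy_schwarz u w : dot u w <= vnorm u * vnorm w.
Proof.
have hu := vnorm_sq u; have hw := vnorm_sq w.
have hu0 := vnorm_ge0 u; have hw0 := vnorm_ge0 w.
set a := vnorm u in hu hu0 *; set b := vnorm w in hw hw0 *.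
apply: le_epsilon => e he.
set c := (b + e / (a + b + 1)) / (a + e / (a + b + 1)).
have hep : 0 < e / (a + b + 1) by apply: Rdiv_lt_0_compat; lra.
set f := e / (a + b + 1) in hep c.
have hc : 0 < c by apply: Rdiv_lt_0_compat; lra.
have := dot_le_weighted u w c hc; rewrite -hu -hw => hw'.
have bound : 2 * dot u w <= c * a ^ 2 + b ^ 2 / c.
  apply: (Rmult_le_reg_l c) => //.
  have -> : c * (c * a ^ 2 + b ^ 2 / c) = c ^ 2 * a ^ 2 + b ^ 2 by field; lra.
  lra.
have ha : c * a ^ 2 <= (b + f) * a.
  rewrite /c; apply: (Rmult_le_reg_r (a + f)); first lra.
  have -> : (b + f) / (a + f) * a ^ 2 * (a + f) = (b + f) * a ^ 2 by field; lra.
  have : 0 <= (b + f) * (a * f) by apply: Rmult_le_pos; nra.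
  nra.
have hb : b ^ 2 / c <= b * (a + f).
  rewrite /c; apply: (Rmult_le_reg_r (b + f)); first lra.
  have -> : b ^ 2 / ((b + f) / (a + f)) * (b + f) = b ^ 2 * (a + f) by field; lra.
  have : 0 <= b * ((a + f) * f) by apply: Rmult_le_pos; nra.
  nra.
have hf : f * (a + b) <= e.
  rewrite /f; apply: (Rmult_le_reg_r (a + b + 1)); first lra.
  have -> : e / (a + b + 1) * (a + b) * (a + b + 1) = e * (a + b) by field; lra.
  nra.
lra.
Qed.
End EuclideanAlgebra.

(* Along the segment from y to z,
   convexity bounds the difference quotient by g z - g y, while
   differentiability makes it eps-close to the directional derivative. *)
Lemma gradient_inequality d (g : vec d -> R) grad y z :
  convex_fun g -> has_gradient g grad -> g y + dot (grad y) (vsub z y) <= g z.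
Proof.
move=> hconv hgrad; set h := vsub z y; set D := dot (grad y) h.
have hn := vnorm_ge0 h.
apply: le_epsilon => eps heps.
set eta := eps / (vnorm h + 1).
have heta : 0 < eta by apply: Rdiv_lt_0_compat; lra.
have [del [hdel Hd]] := hgrad y eta heta.
set t := Rmin 1 (del / (vnorm h + 1)).
have ht0 : 0 < t by apply: Rmin_pos; [lra | apply: Rdiv_lt_0_compat; lra].
have ht1 : t <= 1 by apply: Rmin_l.
have ht_small : t * vnorm h < del.
  have : t * (vnorm h + 1) <= del.
    have -> : del = del / (vnorm h + 1) * (vnorm h + 1) by field; lra.
    by apply: Rmult_le_compat_r; [lra | apply: Rmin_r].
  nra.
have happrox := Hd (vscale t h) ltac:(rewrite vnorm_scale; lra).
rewrite vnorm_scale in happrox; last lra.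
rewrite dot_scaler -/D in happrox.
have hseg : vadd y (vscale t h) = vadd (vscale t z) (vscale (1 - t) y).
  by apply: functional_extensionality => i; rewrite /vadd /vscale /h /vsub; ring.
have hcvx := hconv z y t ltac:(lra); rewrite -hseg in hcvx.
have hlow := Rle_abs (- (g (vadd y (vscale t h)) - g y - t * D)).
rewrite Rabs_Ropp in hlow.
have hquot : t * (D - eta * vnorm h - (g z - g y)) <= 0 by lra.
have hetan : eta * vnorm h <= eps.
  rewrite /eta; apply: (Rmult_le_reg_r (vnorm h + 1)); first lra.
  have -> : eps / (vnorm h + 1) * vnorm h * (vnorm h + 1) = eps * vnorm h
    by field; lra.
  nra.
nra.
Qed.

(* The coefficient a = next_a lam A is the positive root of
   a^2 = lam (A + a), i.e. a_{k+1}^2 = lam_{k+1} A_{k+1}. *)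
Lemma next_a_spec lam A : 0 < lam -> 0 <= A ->
  0 < next_a lam A /\ next_a lam A ^ 2 = lam * (A + next_a lam A).
Proof.
move=> hl hA; rewrite /next_a.
have hq : 0 <= lam ^ 2 + 4 * lam * A by nra.
have hs := sqrt_pos (lam ^ 2 + 4 * lam * A).
have hss := sqrt_sqrt _ hq.
set s := sqrt _ in hs hss *.
split; nra.
Qed.

Lemma Aseq_ge0 lam K :
  (forall k, (1 <= k <= K)%nat -> 0 < lam k) ->
  forall k, (k <= K)%nat -> 0 <= Aseq lam k.
Proof.
move=> hlam; elim=> [|k IH] hk /=; first lra.
have hA := IH (ltnW hk).
have [ha _] := next_a_spec (lam k.+1) (Aseq lam k) (hlam k.+1 hk) hA.
lra.
Qed.

Section OneStepEstimates.
Context {d : nat}.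
Implicit Types X Y xs v s : vec d.

(* Value estimate: with tilde x = (A Y + a X)/(A + a) and v = grad g(Y'),
   the weighted gradient inequalities at Y' tested against Y and xs give
   the increase of the weighted function gap. *)
Lemma value_estimate (g : vec d -> R) grad A a X Y Y' xs :
  convex_fun g -> has_gradient g grad -> 0 <= A -> 0 < a ->
  let xt := vadd (vscale (A / (A + a)) Y) (vscale (a / (A + a)) X) in
  (A + a) * (g Y' - g xs) - A * (g Y - g xs)
    <= (A + a) * dot (grad Y') (vsub Y' xt) + a * dot (grad Y') (vsub X xs).
Proof.
move=> hconv hgrad hA ha xt.
have toY := gradient_inequality _ g grad Y' Y hconv hgrad.
have toXs := gradient_inequality _ g grad Y' xs hconv hgrad.
have hxt : (A + a) * dot (grad Y') xt = A * dot (grad Y') Y + a * dot (grad Y') X.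
  by rewrite /xt !dotE; field; lra.
rewrite !dot_subr in toY toXs *.
have := Rmult_le_compat_l A _ _ hA toY.
have := Rmult_le_compat_l a _ _ (Rlt_le _ _ ha) toXs.
nra.
Qed.

(* Distance estimate for an inexact gradient step X' ~ X - a v:
   expanding the squares, the error e = X' - (X - a v) enters only through
   <e, X' - xs>, which Cauchy-Schwarz controls. *)
Lemma distance_estimate a v X X' xs :
  / 2 * vnorm (vsub X' xs) ^ 2 - / 2 * vnorm (vsub X xs) ^ 2
  + a * dot v (vsub X xs)
    <= vnorm (vsub X' (vsub X (vscale a v))) * vnorm (vsub X' xs)
       + / 2 * a ^ 2 * vnorm v ^ 2.
Proof.
set e := vsub X' (vsub X (vscale a v)).
have expand : / 2 * vnorm (vsub X' xs) ^ 2 - / 2 * vnorm (vsub X xs) ^ 2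
      + a * dot v (vsub X xs)
    = dot e (vsub X' xs) + / 2 * a ^ 2 * vnorm v ^ 2
      - / 2 * dot (vadd (vscale a v) (vsub X' X)) (vadd (vscale a v) (vsub X' X)).
  rewrite !vnorm_sq /e !dotE.
  rewrite ?(dot_comm xs X') ?(dot_comm xs X) ?(dot_comm X X') ?(dot_comm X' v)
          ?(dot_comm X v) ?(dot_comm xs v).
  field.
rewrite expand.
have := cauchy_schwarz e (vsub X' xs).
have := dot_ge0 (vadd (vscale a v) (vsub X' X)).
lra.
Qed.

(* Relative-error estimate for an inexact proximal step: if
   |l v + s| <= sigma |s| + l delta, then expanding |l v + s|^2 and
   absorbing the cross term by Young's inequality gives the bound. *)
Lemma relative_error_estimate sigma delta l v s :
  0 < sigma < 1 -> 0 < l ->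
  vnorm (vadd (vscale l v) s) <= sigma * vnorm s + l * delta ->
  2 * l * dot v s + l ^ 2 * vnorm v ^ 2 + (1 - sigma) * vnorm s ^ 2
    <= (l * delta) ^ 2 / (1 - sigma).
Proof.
move=> hs hl herr.
set r := vadd (vscale l v) s in herr.
have expand : vnorm r ^ 2 = l ^ 2 * vnorm v ^ 2 + 2 * l * dot v s + vnorm s ^ 2.
  by rewrite !vnorm_sq /r !dotE (dot_comm s v); ring.
have hr0 := vnorm_ge0 r; have ht0 := vnorm_ge0 s.
have hsq : vnorm r ^ 2 <= (sigma * vnorm s + l * delta) ^ 2 by apply: pow_incr.
have young : (1 - sigma) * (sigma * vnorm s + l * delta) ^ 2
    <= sigma * (1 - sigma) * vnorm s ^ 2 + (l * delta) ^ 2.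
  have := pow2_ge_0 ((1 - sigma) * vnorm s - l * delta); nra.
apply: (Rmult_le_reg_l (1 - sigma)); first lra.
have -> : (1 - sigma) * ((l * delta) ^ 2 / (1 - sigma)) = (l * delta) ^ 2
  by field; lra.
nra.
Qed.

End OneStepEstimates.

(* Regrouping needed to read the proximal residual as l v + s. *)
Lemma vsub_vaddA d (u w z : vec d) : vsub (vadd u w) z = vadd u (vsub w z).
Proof. by apply: functional_extensionality => i; rewrite /vsub /vadd; ring. Qed.

Section Lyapunov.
Context {d : nat} (g : vec d -> R) (grad : vec d -> vec d).
Context (sigma delta : R) (lam : nat -> R) (x y : nat -> vec d) (xs : vec d).
Hypothesis g_convex : convex_fun g.
Hypothesis g_grad : has_gradient g grad.
Hypothesis sigma_range : 0 < sigma < 1.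

Definition energy (k : nat) : R :=
  Aseq lam k * (g (y k) - g xs) + / 2 * vnorm (vsub (x k) xs) ^ 2.

Lemma energy_step k :
  0 < lam k.+1 -> 0 <= Aseq lam k ->
  vnorm (vsub (vadd (vscale (lam k.+1) (grad (y k.+1))) (y k.+1))
              (xtilde lam x y k))
    <= sigma * vnorm (vsub (y k.+1) (xtilde lam x y k)) + lam k.+1 * delta ->
  vnorm (vsub (x k.+1) (vsub (x k) (vscale (aseq lam k.+1) (grad (y k.+1)))))
    <= aseq lam k.+1 * delta ->
  energy k.+1
  + (1 - sigma) * Aseq lam k.+1 / (2 * lam k.+1)
    * vnorm (vsub (y k.+1) (xtilde lam x y k)) ^ 2
  <= energy k + delta * (aseq lam k.+1 * vnorm (vsub (x k.+1) xs))
     + delta ^ 2 / (2 * (1 - sigma)) * aseq lam k.+1 ^ 2.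
Proof.
move=> hl hA hprox hgradstep.
have [ha ha2] := next_a_spec _ _ hl hA.
rewrite -/(aseq lam k.+1) in ha ha2.
set A := Aseq lam k in hA ha2 *; set a := aseq lam k.+1 in ha ha2 hgradstep *.
set l := lam k.+1 in hl ha2 hprox *.
have hA' : Aseq lam k.+1 = A + a by [].
set v := grad (y k.+1) in hprox hgradstep *.
set s := vsub (y k.+1) (xtilde lam x y k) in hprox *.
have value : (A + a) * (g (y k.+1) - g xs) - A * (g (y k) - g xs)
    <= (A + a) * dot v s + a * dot v (vsub (x k) xs)
  := value_estimate g grad A a (x k) (y k) (y k.+1) xs g_convex g_grad hA ha.
have dist := distance_estimate a v (x k) (x k.+1) xs.
rewrite vsub_vaddA in hprox.
have prox := relative_error_estimate sigma delta l v s sigma_range hl hprox.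
(* Scaling the proximal estimate by (A + a)/(2 l) and using a^2 = l (A + a). *)
have prox' : (A + a) * dot v s + / 2 * a ^ 2 * vnorm v ^ 2
    + (1 - sigma) * (A + a) / (2 * l) * vnorm s ^ 2
    <= delta ^ 2 / (2 * (1 - sigma)) * a ^ 2.
  have hw : 0 <= (A + a) / (2 * l) by apply: Rlt_le; apply: Rdiv_lt_0_compat; lra.
  have -> : (A + a) * dot v s + / 2 * a ^ 2 * vnorm v ^ 2
      + (1 - sigma) * (A + a) / (2 * l) * vnorm s ^ 2
    = (A + a) / (2 * l) * (2 * l * dot v s + l ^ 2 * vnorm v ^ 2
                           + (1 - sigma) * vnorm s ^ 2).
    by rewrite ha2; field; lra.
  have -> : delta ^ 2 / (2 * (1 - sigma)) * a ^ 2
    = (A + a) / (2 * l) * ((l * delta) ^ 2 / (1 - sigma)).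
    by rewrite ha2; field; lra.
  exact: Rmult_le_compat_l.
have hn := vnorm_ge0 (vsub (x k.+1) xs).
have herr := Rmult_le_compat_r _ _ _ hn hgradstep.
rewrite /energy hA' -/A.
lra.
Qed.

End Lyapunov.

Lemma sum1S f k : sum1 f k.+1 = sum1 f k + f k.+1.
Proof. by rewrite /sum1 big_nat_recr. Qed.

Lemma sum10 f : sum1 f 0 = 0.
Proof. by rewrite /sum1 big_geq. Qed.

Theorem mainTheorem11 (d : nat) (g : vec d -> R) (grad : vec d -> vec d)
  (sigma delta : R) (K : nat) (lam : nat -> R) (x y : nat -> vec d) (xs : vec d) :
  convex_fun g ->
  has_gradient g grad ->
  (forall z : vec d, g xs <= g z) ->
  0 < sigma < 1 ->
  0 <= delta ->
  (1 <= K)%nat ->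
  generated_by_framework grad sigma delta K lam x y ->
  forall k : nat, (1 <= k <= K)%nat ->
    Aseq lam k * (g (y k) - g xs) + / 2 * vnorm (vsub (x k) xs) ^ 2
    + sum1 (fun i => (1 - sigma) * Aseq lam i / (2 * lam i)
                     * vnorm (vsub (y i) (xtilde lam x y (i.-1))) ^ 2) k
    <= / 2 * vnorm xs ^ 2
       + (delta * sum1 (fun i => aseq lam i * vnorm (vsub (x i) xs)) k
          + delta ^ 2 / (2 * (1 - sigma)) * sum1 (fun i => aseq lam i ^ 2) k).
Proof.
move=> hconv hgrad _ hs _ _ [hlam [hx0 [_ hstep]]] k /andP [_ hk].
rewrite -/(energy g lam x y xs k).
(* Telescoping the one-step decrease from E_0 = |xs|^2 / 2. *)
elim: k hk => [|k IH] hk.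
  by rewrite !sum10 /energy hx0 vnorm_vzero_sub /=; lra.
have [hprox hgradstep] := hstep k hk.
have decrease := energy_step g grad sigma delta lam x y xs hconv hgrad hs k
  (hlam k.+1 hk) (Aseq_ge0 lam K hlam k (ltnW hk)) hprox hgradstep.
have := IH (ltnW hk).
rewrite !sum1S; cbv beta; change k.+1.-1 with k.
lra.
Qed.
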